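(* Let $(\Gamma,\tau)$ be a $z$-oriented triangulation of a connected closed $2$-dimensional surface. If $(\Gamma,\tau)$ has a face of type I, then the Markov chain $\mathcal{X}_{\tau}$ is ergodic.
   Context: A triangulation $\Gamma$ of a connected closed surface $M$ (not necessarily orientable) is a closed $2$-cell embedding of a connected finite simple graph in $M$ all of whose faces are triangles. Two edges are adjacent if distinct and in a common face; two faces are adjacent if distinct and their intersection is an edge. A zigzag is a sequence of edges $(e_i)_{i\in\mathbb{N}}$ such that for every $i$: $e_i,e_{i+1}$ are adjacent, the faces containing $e_i,e_{i+1}$ and $e_{i+1},e_{i+2}$ are adjacent, and $e_i,e_{i+2}$ are disjoint; it is a cyclic sequence, equivalently a cyclic vertex sequence $v_1,\dots,v_n$ with $e_i=v_iv_{i+1}$, traversing $e_i$ from $v_i$ to $v_{i+1}$. A $z$-orientation $\tau$ is a set of zigzags containing exactly one of $Z,Z^{-1}$ (reversed zigzag) for every zigzag $Z$. Every edge is traversed exactly twice in total by zigzags of $\tau$; it is of type I if in opposite directions, of type II if in the same direction (then regarded as directed that way). Each face has either two type I edges and one type II edge (face of type I) or three type II edges forming a directed cycle (face of type II). For $v\in V=\{v_1,\dots,v_n\}$ let $d(v)$ be the number of type I edges at $v$ plus twice the number of type II edges directed out of $v$. $\mathcal{X}_{\tau}$ is the time-homogeneous Markov chain on $V$ with $p_{ij}=1/d(v_i)$ if $v_iv_j$ is a type I edge, $p_{ij}=2/d(v_i)$ if $v_iv_j$ is a type II edge directed from $v_i$ to $v_j$, $p_{ij}=0$ otherwise. Ergodic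 means irreducible and aperiodic. *)

From mathcomp Require Import all_boot all_order all_algebra.
Set Implicit Arguments. Unset Strict Implicit. Unset Printing Implicit Defensive.
Import Order.TTheory GRing.Theory Num.Theory.

Section Triangulation.
Variable V : finType.

(* A triangulation is given by its vertex type V and its set of faces F,
   each face being the (3-element) set of its vertices. *)
Variable F : {set {set V}}.

Definition adj : rel V :=
  fun u w => (u != w) && [exists f in F, (u \in f) && (w \in f)].

Definition link_rel (v : V) : rel V := fun u w => [set v; u; w] \in F.

Definition triangulation : Prop :=
  [/\ F != set0 /\ (forall f, f \in F -> #|f| = 3),
      (forall v : V, exists2 f, f \in F & v \in f),
      (forall u w : V, adj u w -> #|[set f in F | (u \in f) && (w \in f)]| = 2),
      (* the link of every vertex is connected (so a single cycle): closed surface *)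
      (forall v u w : V, adj v u -> adj v w -> connect (link_rel v) u w) &
      (forall u w : V, connect adj u w)].

(* Zigzags.  A zigzag is given by its vertex sequence z, e_i = z_i z_(i+1). *)
Definition zz_edge (z : nat -> V) (i : nat) : {set V} := [set z i; z i.+1].

Definition is_zigzag_seq (z : nat -> V) : Prop :=
  forall i : nat,
    [/\ #|zz_edge z i| = 2,
        (* e_i, e_(i+1) adjacent: distinct and in a common face *)
        zz_edge z i != zz_edge z i.+1,
        (exists2 f, f \in F & (zz_edge z i :|: zz_edge z i.+1) \subset f),
        (* the faces containing e_i,e_(i+1) and e_(i+1),e_(i+2) are adjacent *)
        (zz_edge z i :|: zz_edge z i.+1) != (zz_edge z i.+1 :|: zz_edge z i.+2)
        /\ #|(zz_edge z i :|: zz_edge z i.+1) :&: (zz_edge z i.+1 :|: zz_edge z i.+2)| = 2 &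
        [disjoint zz_edge z i & zz_edge z i.+2]].

(* A zigzag (cyclic sequence) is represented by the set of its consecutive
   vertex triples (z_i, z_(i+1), z_(i+2)); this determines the cyclic
   sequence, and is invariant under cyclic shift. *)
Definition is_zigzag (Z : {set V * V * V}) : Prop :=
  exists z : nat -> V, is_zigzag_seq z /\
    (forall s, s \in Z <-> exists i, s = (z i, z i.+1, z i.+2)).

Definition rev_zz (Z : {set V * V * V}) : {set V * V * V} :=
  [set (s.2, s.1.2, s.1.1) | s in Z].

Definition z_orientation (tau : {set {set V * V * V}}) : Prop :=
  (forall Z, Z \in tau -> is_zigzag Z) /\
  (forall Z, is_zigzag Z -> #|tau :&: [set Z; rev_zz Z]| = 1).

Variable tau : {set {set V * V * V}}.

(* number of times the zigzags of tau traverse the edge from u to w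
   (= number of i modulo the period with (z_i, z_(i+1)) = (u, w)) *)
Definition trav (u w : V) : nat :=
  \sum_(Z in tau) #|[set s in Z | (s.1.1 == u) && (s.1.2 == w)]|.

Definition typeI (u w : V) : bool := (trav u w == 1) && (trav w u == 1).
Definition typeII (u w : V) : bool := (trav u w == 2) && (trav w u == 0).

Definition has_face_typeI : Prop :=
  exists a b c : V, [/\ [set a; b; c] \in F, typeI a b, typeI b c &
                        typeII a c || typeII c a].

Definition zdeg (v : V) : nat := \sum_(w : V) (typeI v w + 2 * typeII v w).

Definition ptrans (v w : V) : rat :=
  (((typeI v w)%:R + 2 * (typeII v w)%:R) / (zdeg v)%:R)%R.

End Triangulation.

Fixpoint nstep (T : finType) (p : T -> T -> rat) (k : nat) (i j : T) : rat :=
  match k with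
  | 0 => ((i == j)%:R)%R
  | k'.+1 => (\sum_(l : T) p i l * nstep p k' l j)%R
  end.

Definition irreducible (T : finType) (p : T -> T -> rat) : Prop :=
  forall i j : T, exists k, (0 < nstep p k i j)%R.

(* every state has period gcd{k >= 1 | P^k(i,i) > 0} equal to 1 *)
Definition aperiodic (T : finType) (p : T -> T -> rat) : Prop :=
  forall (i : T) (d : nat),
    (forall k, 0 < k -> (0 < nstep p k i i)%R -> d %| k) -> d = 1.

Definition ergodic (T : finType) (p : T -> T -> rat) : Prop :=
  irreducible p /\ aperiodic p.

(* Oriented faces (x, y, w) of the triangulation are permuted by the zigzag step
   (x, y, w) |-> (y, w, w'), where w' is the third vertex of the other face on the
   edge yw.  Zigzags are exactly its orbits, and reversal of triples conjugates the
   step to its inverse, so the reverse of a zigzag is a zigzag, distinct from it.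
   If a and b are the two vertices opposite an edge uw, the zigzags traverse it from
   u to w at (u, w, a) and (u, w, b), and from w to u at (w, u, b) and (w, u, a),
   which lie on the reverses of the zigzags through (u, w, a) and (u, w, b).  Since
   a z-orientation keeps exactly one zigzag of each reverse pair, the edge is
   traversed twice in total: it is of type I or II.  When it is never traversed
   from u to w, both reversed zigzags are kept and lead from u to a and from a to w,
   so connectedness of the graph gives irreducibility.  A face of type I carries
   closed walks of lengths 2 and 3, which gives aperiodicity. *)

From mathcomp Require Import all_boot all_order all_algebra.
From mathcomp Require Import zify.
Set Implicit Arguments. Unset Strict Implicit. Unset Printing Implicit Defensive.
Import Order.TTheory GRing.Theory Num.Theory.

Section SmallSets.
Variable T : finType.
Implicit Types a b c : T.

Lemma set3_rot a b c : [set a; b; c] = [set b; c; a].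
Proof. by apply/setP=> v; rewrite !inE [RHS]orbC orbA. Qed.

Lemma set3_rev a b c : [set a; b; c] = [set c; b; a].
Proof. by apply/setP=> v; rewrite !inE orbC [_ || (v == b)]orbC orbA. Qed.

Lemma setU2_chain a b c : [set a; b] :|: [set b; c] = [set a; b; c].
Proof. by apply/setP=> v; rewrite !inE orbA -[_ || _ || (v == b)]orbA orbb. Qed.

Lemma card_setI2 (S : {set T}) a b : a != b ->
  #|S :&: [set a; b]| = (a \in S) + (b \in S).
Proof.
move=> ab; rewrite -sum1_card (eq_bigl (fun v => (v \in [set a; b]) && (v \in S))).
  by rewrite big_mkcondr /= big_setU1 ?big_set1 ?inE.
by move=> v; rewrite inE andbC.
Qed.

Lemma card_set3 a b c : uniq [:: a; b; c] -> #|[set a; b; c]| = 3.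
Proof. by rewrite -setUA cardsU1 cards2 /= !inE => /andP[-> /andP[->]]. Qed.

End SmallSets.

Section MarkovChain.
Variables (T : finType) (p : T -> T -> rat).
Hypothesis p_ge0 : forall i j, (0 <= p i j)%R.
Local Open Scope ring_scope.

Lemma nstep_ge0 k i j : 0 <= nstep p k i j.
Proof.
elim: k i => [|k IH] i /=; first exact: ler0n.
by apply: sumr_ge0 => l _; apply: mulr_ge0.
Qed.

Lemma nstep1 i j : nstep p 1 i j = p i j.
Proof.
rewrite /= (bigD1 j) //= eqxx mulr1 big1 ?addr0 // => l /negbTE->.
by rewrite mulr0.
Qed.

Lemma nstepD_ge m n i l j : nstep p m i l * nstep p n l j <= nstep p (m + n) i j.
Proof.
elim: m i => [|m IH] i /=.
  by case: eqVneq => [->|_]; rewrite ?mul1r ?mul0r ?nstep_ge0.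
rewrite mulr_suml; apply: ler_sum => x _; rewrite -mulrA.
exact: ler_wpM2l.
Qed.

Lemma nstepD_gt0 m n i l j :
  0 < nstep p m i l -> 0 < nstep p n l j -> 0 < nstep p (m + n) i j.
Proof. by move=> il lj; apply: lt_le_trans (nstepD_ge m n i l j); apply: mulr_gt0. Qed.

Definition reachable (i j : T) : Prop := exists k, 0 < nstep p k i j.

Lemma reachable_trans i l j : reachable i l -> reachable l j -> reachable i j.
Proof. by move=> [m il] [n lj]; exists (m + n)%N; apply: nstepD_gt0 il lj. Qed.

Lemma reachable_step i j : 0 < p i j -> reachable i j.
Proof. by exists 1%N; rewrite nstep1. Qed.

Lemma irreducible_connect (e : rel T) : (forall i j, connect e i j) ->
  (forall i j, e i j -> reachable i j) -> irreducible p.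
Proof.
move=> e_conn e_reach i j; have /connectP[s] := e_conn i j.
elim: s i => [i _ ->|l s IH i /= /andP[il ls] lj].
  by exists 0%N; rewrite /= eqxx ltr01.
exact: reachable_trans (e_reach _ _ il) (IH _ ls lj).
Qed.

Lemma aperiodic_coprime a m n : irreducible p -> (0 < m)%N -> coprime m n ->
  0 < nstep p m a a -> 0 < nstep p n a a -> aperiodic p.
Proof.
move=> irr m_gt0 co_mn cyc_m cyc_n i d d_div.
have [k1 ia] := irr i a; have [k2 ai] := irr a i.
have return_dvd L : 0 < nstep p L a a -> (d %| k1 + (L + m) + k2)%N.
  move=> cyc_L; apply: d_div; first by lia.
  by apply: (nstepD_gt0 _ ai); apply: (nstepD_gt0 ia); apply: nstepD_gt0 cyc_L cyc_m.
have d_base : (d %| k1 + (0 + m) + k2)%N by apply: return_dvd; rewrite /= eqxx ltr01.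
have d_cycle L : 0 < nstep p L a a -> (d %| L)%N.
  move/return_dvd; rewrite (_ : k1 + _ + _ = L + (k1 + (0 + m) + k2))%N; last by lia.
  by rewrite dvdn_addl.
by apply/eqP; rewrite -dvdn1 -(eqP co_mn) dvdn_gcd !d_cycle.
Qed.

End MarkovChain.

Section Zigzags.
Variables (V : finType) (F : {set {set V}}).
Hypothesis card_face : forall f, f \in F -> #|f| = 3.
Hypothesis edge_two_faces : forall u w, adj F u w ->
  #|[set f in F | (u \in f) && (w \in f)]| = 2.

Definition face_triple (t : V * V * V) : bool :=
  let: (x, y, w) := t in uniq [:: x; y; w] && ([set x; y; w] \in F).
Arguments face_triple : simpl never.

Definition rev3 (t : V * V * V) : V * V * V := (t.2, t.1.2, t.1.1).

Lemma rev3K : involutive rev3.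
Proof. by case=> [[]]. Qed.

Lemma face_tripleE x y w :
  face_triple (x, y, w) = uniq [:: x; y; w] && ([set x; y; w] \in F).
Proof. by []. Qed.

Lemma face_triple_neq x y w : face_triple (x, y, w) -> [/\ x != y, x != w & y != w].
Proof. by rewrite face_tripleE /= !inE !negb_or andbT => /andP[/andP[/andP[]]]. Qed.

Lemma face_triple_rot x y w : face_triple (x, y, w) = face_triple (y, w, x).
Proof. by rewrite !face_tripleE -(rot_uniq 1 [:: x; y; w]) set3_rot. Qed.

Lemma face_triple_rev3 t : face_triple (rev3 t) = face_triple t.
Proof.
case: t => [[x y] w]; rewrite !face_tripleE -(rev_uniq [:: x; y; w]).
by rewrite /= set3_rev.
Qed.

Lemma face_triple_adj x y w : face_triple (x, y, w) -> adj F x y.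
Proof.
move=> xyw; have [xy _ _] := face_triple_neq xyw; have /andP[_ xywF] := xyw.
by rewrite /adj xy; apply/existsP; exists [set x; y; w]; rewrite xywF !inE !eqxx orbT.
Qed.

Lemma face_triple_of_face f u w : f \in F -> u != w -> u \in f -> w \in f ->
  exists2 c, face_triple (u, w, c) & f = [set u; w; c].
Proof.
move=> fF uw uf wf.
have uw_f : [set u; w] \subset f by apply/subsetP=> v; rewrite !inE => /orP[]/eqP->.
have /cards1P[c fc] : #|f :\: [set u; w]| == 1 by rewrite cardsDS // card_face // cards2 uw.
have : c \in f :\: [set u; w] by rewrite fc set11.
rewrite !inE negb_or => /andP[/andP[cu cw] cf].
have uniq_uwc : uniq [:: u; w; c] by rewrite /= !inE negb_or uw eq_sym cu eq_sym cw.
suff ef : f = [set u; w; c] by exists c; rewrite // face_tripleE uniq_uwc -ef.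
apply/setP=> v; rewrite !inE; apply/idP/idP => [vf|/orP[/orP[]|]/eqP-> //].
case: eqVneq => [//|vu]; case: eqVneq => [//|vw] /=.
by rewrite -in_set1 -fc !inE negb_or vu vw.
Qed.

Lemma edge_thirds u w : adj F u w ->
  exists a b, a != b /\ forall c, face_triple (u, w, c) = (c == a) || (c == b).
Proof.
move=> uw_adj; have uw : u != w by case/andP: uw_adj.
have /eqP/cards2P[f1 [f2 [f12 faces_uw]]] := edge_two_faces uw_adj.
have face_uw f : [&& f \in F, u \in f & w \in f] = (f == f1) || (f == f2).
  by rewrite -in_set2 -faces_uw inE.
have /and3P[f1F uf1 wf1] : [&& f1 \in F, u \in f1 & w \in f1] by rewrite face_uw eqxx.
have /and3P[f2F uf2 wf2] : [&& f2 \in F, u \in f2 & w \in f2].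
  by rewrite face_uw eqxx orbT.
have [a uwa ef1] := face_triple_of_face f1F uw uf1 wf1.
have [b uwb ef2] := face_triple_of_face f2F uw uf2 wf2.
subst f1 f2.
exists a, b; split; first by apply: contraNneq f12 => ->.
move=> c; apply/idP/idP => [uwc|/orP[]/eqP-> //].
have [_ uc wc] := face_triple_neq uwc; have /andP[_ uwcF] := uwc.
have := face_uw [set u; w; c]; rewrite uwcF !inE !eqxx orbT /=.
case/esym/orP=> /eqP/setP/(_ c); rewrite !inE eqxx orbT (eq_sym c u) (eq_sym c w).
  by rewrite (negbTE uc) (negbTE wc) /= => /esym->.
by rewrite (negbTE uc) (negbTE wc) /= => /esym->; rewrite orbT.
Qed.

Lemma other_third x y w : face_triple (x, y, w) ->
  exists v, forall c, face_triple (y, w, c) && (c != x) = (c == v).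
Proof.
rewrite face_triple_rot => ywx.
have [a [b [ab thirds]]] := edge_thirds (face_triple_adj ywx).
have := thirds x; rewrite ywx => /esym/orP[]/eqP->.
  exists b => c; rewrite thirds.
  by case: (eqVneq c a) => [->|_]; rewrite ?eqxx /= ?andbT ?andbF ?(negbTE ab).
exists a => c; rewrite thirds.
by case: (eqVneq c b) => [->|_]; rewrite ?eqxx /= ?orbF ?andbT ?andbF // eq_sym (negbTE ab).
Qed.

Definition opposite (x y w : V) : V :=
  odflt x [pick v | face_triple (y, w, v) && (v != x)].

Lemma oppositeP x y w : face_triple (x, y, w) ->
  forall c, face_triple (y, w, c) && (c != x) = (c == opposite x y w).
Proof.
move=> /other_third[v other_v]; suff -> : opposite x y w = v by [].
rewrite /opposite; case: pickP => [o | none]; first by rewrite other_v => /eqP.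
by have := none v; rewrite other_v eqxx.
Qed.

Lemma opposite_face x y w : face_triple (x, y, w) ->
  face_triple (y, w, opposite x y w) && (opposite x y w != x).
Proof. by move/oppositeP->. Qed.

Lemma opposite_uniq x y w v : face_triple (x, y, w) ->
  face_triple (y, w, v) -> v != x -> v = opposite x y w.
Proof. by move=> /oppositeP xyw ywv vx; apply/eqP; rewrite -xyw ywv. Qed.

(* Off face triples [zstep] is the identity, which makes it a permutation of [V * V * V]. *)
Definition zstep (t : V * V * V) : V * V * V :=
  if face_triple t then (t.1.2, t.2, opposite t.1.1 t.1.2 t.2) else t.

Lemma zstepE x y w : face_triple (x, y, w) -> zstep (x, y, w) = (y, w, opposite x y w).
Proof. by rewrite /zstep => ->. Qed.

Lemma face_triple_zstep t : face_triple (zstep t) = face_triple t.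
Proof.
case: t => [[x y] w]; have [xyw|not_xyw] := boolP (face_triple (x, y, w)); last first.
  by rewrite /zstep (negbTE not_xyw) (negbTE not_xyw).
by rewrite zstepE //; case/andP: (opposite_face xyw).
Qed.

Lemma face_triple_iter n t : face_triple (iter n zstep t) = face_triple t.
Proof. by elim: n => //= n IH; rewrite face_triple_zstep. Qed.

Lemma zstep_rev3_zstep t : zstep (rev3 (zstep t)) = rev3 t.
Proof.
case: t => [[x y] w]; have [xyw|not_xyw] := boolP (face_triple (x, y, w)); last first.
  have -> : zstep (x, y, w) = (x, y, w) by rewrite /zstep (negbTE not_xyw).
  by rewrite /zstep face_triple_rev3 (negbTE not_xyw).
have /andP[ywo ox] := opposite_face xyw.
have owy : face_triple (opposite x y w, w, y) by rewrite -face_triple_rev3.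
have wyx : face_triple (w, y, x) by rewrite -face_triple_rev3.
by rewrite zstepE //= zstepE // -(opposite_uniq owy wyx) // eq_sym.
Qed.

Lemma zstep_inj : injective zstep.
Proof.
apply: (can_inj (g := fun t => rev3 (zstep (rev3 t)))) => t.
by rewrite zstep_rev3_zstep rev3K.
Qed.

Definition zorbit (t : V * V * V) : {set V * V * V} := [set s | fconnect zstep t s].

Lemma zorbit_refl t : t \in zorbit t.
Proof. by rewrite inE connect0. Qed.

Lemma zorbit_eq s t : s \in zorbit t -> zorbit s = zorbit t.
Proof.
rewrite inE => ts; apply/setP=> r; rewrite !inE.
apply/idP/idP => [sr|tr]; first exact: connect_trans ts sr.
by apply: connect_trans tr; rewrite fconnect_sym //; apply: zstep_inj.
Qed.

Lemma mem_zorbit_face s t : s \in zorbit t -> face_triple s = face_triple t.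
Proof. by rewrite inE => /iter_findex <-; rewrite face_triple_iter. Qed.

Lemma zorbit_zstep t : zorbit (zstep t) = zorbit t.
Proof. by apply: zorbit_eq; rewrite inE fconnect1. Qed.

Lemma fconnect_rev3 s t : fconnect zstep s t -> fconnect zstep (rev3 t) (rev3 s).
Proof.
move/iter_findex <-; elim: (findex _ _ _) => [|n IH] /=; first exact: connect0.
apply: connect_trans IH; rewrite -[X in fconnect _ _ X]zstep_rev3_zstep; exact: fconnect1.
Qed.

Lemma zorbit_rev3 t : zorbit (rev3 t) = rev_zz (zorbit t).
Proof.
rewrite /rev_zz -/rev3 (can_imset_pre _ rev3K); apply/setP=> s; rewrite !inE.
by apply/idP/idP => /fconnect_rev3; rewrite rev3K fconnect_sym //; apply: zstep_inj.
Qed.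

Lemma zorbit_rev3_neq t : face_triple t -> rev_zz (zorbit t) != zorbit t.
Proof.
move=> ft; apply/eqP => rev_sym.
have : rev3 t \in zorbit t by rewrite -rev_sym -zorbit_rev3 zorbit_refl.
rewrite inE => /iter_findex; move: (findex _ _ _) => c rev_t.
(* [rev3] reflects the cycle of [t]: the k-th triple is sent to the (c-k)-th one. *)
have rev3_iter k : k <= c -> rev3 (iter k zstep t) = iter (c - k) zstep t.
  elim: k => [_|k IH lt_kc]; first by rewrite subn0 rev_t.
  apply: zstep_inj; rewrite iterS zstep_rev3_zstep IH ?(ltnW lt_kc) //.
  by rewrite -[zstep (iter _ _ _)]iterS subnSK.
have [k [ec|ec]] : exists k, c = k.*2 \/ c = k.*2.+1.
  exists c./2; have := odd_double_half c.
  by case: (odd c) => e; [right|left]; rewrite -{1}e.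
- have := rev3_iter k; rewrite ec -addnn addnK leq_addr => /(_ isT).
  have := face_triple_iter k t; rewrite ft; case: (iter k zstep t) => [[x y] w].
  by case/face_triple_neq=> _ xw _ [/eqP]; rewrite eq_sym (negbTE xw).
- have := rev3_iter k; rewrite ec -addnn subSn ?leq_addr // addKn leqW ?leq_addr //.
  move/(_ isT); have := face_triple_iter k t; rewrite ft /=.
  case: (iter k zstep t) => [[x y] w] xyw; rewrite zstepE //.
  by case: (face_triple_neq xyw) => _ _ yw [/eqP]; rewrite eq_sym (negbTE yw).
Qed.

Definition trip (z : nat -> V) (i : nat) : V * V * V := (z i, z i.+1, z i.+2).

Lemma zigzag_seq_faces z : is_zigzag_seq F z ->
  forall i, face_triple (trip z i) && (z i != z i.+3).
Proof.
move=> zz i; have [ei ei_ei1 [f fF ei_f] [faces_neq _] _] := zz i.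
have [ei1 _ _ _ _] := zz i.+1.
move: ei ei1 ei_ei1 ei_f faces_neq; rewrite /zz_edge !setU2_chain !cards2.
move=> /eqP; rewrite eqSS eqb1 => ab /eqP; rewrite eqSS eqb1 => bc.
move=> ab_bc abc_f abc_bcd.
have ac : z i != z i.+2 by apply: contraNneq ab_bc => ->; rewrite setUC.
have uniq_abc : uniq [:: z i; z i.+1; z i.+2] by rewrite /= !inE negb_or ab ac bc.
apply/andP; split; last by apply: contraNneq abc_bcd => ->; rewrite set3_rot.
rewrite face_tripleE uniq_abc; suff -> : [set z i; z i.+1; z i.+2] = f by [].
by apply/eqP; rewrite eqEcard abc_f card_face // card_set3.
Qed.

Lemma zigzag_seq_of_faces z :
  (forall i, face_triple (trip z i) && (z i != z i.+3)) -> is_zigzag_seq F z.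
Proof.
move=> faces i; have /andP[abc ad] := faces i; have /andP[bcd _] := faces i.+1.
have [ab ac bc] := face_triple_neq abc; have [_ bd cd] := face_triple_neq bcd.
have /andP[_ abcF] : face_triple (z i, z i.+1, z i.+2) := abc.
rewrite /zz_edge !setU2_chain; move: abcF ab ac ad bc bd cd.
move: (z i) (z i.+1) (z i.+2) (z i.+3) => a b c d abcF ab ac ad bc bd cd.
have eqF (x y : V) : x != y -> (y == x) = false by rewrite eq_sym => /negbTE.
have neqs := (negbTE ab, negbTE ac, negbTE ad, negbTE bc, negbTE bd, negbTE cd,
  eqF _ _ ab, eqF _ _ ac, eqF _ _ ad, eqF _ _ bc, eqF _ _ bd, eqF _ _ cd).
split.
- by rewrite cards2 ab.
- by apply/eqP => /setP/(_ a); rewrite !inE eqxx !neqs.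
- by exists [set a; b; c].
- split; first by apply/eqP => /setP/(_ a); rewrite !inE eqxx !neqs.
  suff -> : [set a; b; c] :&: [set b; c; d] = [set b; c] by rewrite cards2 bc.
  apply/setP=> v; rewrite !inE; have [->|va] := eqVneq v a; first by rewrite !neqs.
  have [->|vd] := eqVneq v d; first by rewrite !neqs.
  by rewrite orbF andbb.
- rewrite -setI_eq0; apply/eqP/setP=> v; rewrite !inE.
  have [->|va] := eqVneq v a; first by rewrite !neqs.
  by have [->|vb] := eqVneq v b; rewrite ?neqs // (negbTE va).
Qed.

Lemma zigzag_faces_zstep z :
  (forall i, face_triple (trip z i) && (z i != z i.+3)) <->
  face_triple (trip z 0) /\ (forall i, trip z i.+1 = zstep (trip z i)).
Proof.
split=> [faces | [z0 step]].
  split=> [|i]; first by case/andP: (faces 0).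
  have /andP[abc ad] := faces i; have /andP[bcd _] := faces i.+1.
  rewrite [trip z i]/trip zstepE //; congr (_, _, _).
  by apply: opposite_uniq; rewrite // eq_sym.
have face_i i : face_triple (trip z i).
  by elim: i => // i IH; rewrite step face_triple_zstep.
move=> i; rewrite face_i /=; have := step i; rewrite [trip z i]/trip (zstepE (face_i i)).
by case=> ->; case/andP: (opposite_face (face_i i)); rewrite eq_sym.
Qed.

Lemma is_zigzagP Z : is_zigzag F Z <-> exists2 t, face_triple t & Z = zorbit t.
Proof.
split=> [[z [zz memZ]] | [t ft ->]].
  have [z0 step] := (zigzag_faces_zstep z).1 (zigzag_seq_faces zz).
  have tripE i : trip z i = iter i zstep (trip z 0) by elim: i => //= i <-.
  exists (trip z 0) => //; apply/setP=> s; rewrite inE; apply/idP/idP.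
    by case/memZ=> i ->; rewrite -[(z i, _, _)]/(trip z i) (tripE i) fconnect_iter.
  by move/iter_findex <-; apply/memZ; exists (findex zstep (trip z 0) s); rewrite -tripE.
pose z i := (iter i zstep t).1.1.
have tripE i : trip z i = iter i zstep t.
  rewrite /trip /z !iterS; have := face_triple_iter i t; rewrite ft.
  case: (iter i zstep t) => [[x y] w] xyw; rewrite zstepE //=.
  by case/andP: (opposite_face xyw) => ywo _; rewrite zstepE.
exists z; split=> [|s].
  apply: zigzag_seq_of_faces; apply/zigzag_faces_zstep.
  by split=> [|i]; rewrite !tripE.
rewrite inE; split=> [/iter_findex <-|[i ->]].
  by exists (findex zstep t s); rewrite -tripE.
by rewrite -[(z i, _, _)]/(trip z i) tripE fconnect_iter.
Qed.

Variable tau : {set {set V * V * V}}.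
Hypothesis tau_zigzag : forall Z, Z \in tau -> is_zigzag F Z.
Hypothesis tau_orients : forall Z, is_zigzag F Z -> #|tau :&: [set Z; rev_zz Z]| = 1.

Definition chosen (t : V * V * V) : bool := zorbit t \in tau.

Lemma chosen_zstep t : chosen (zstep t) = chosen t.
Proof. by rewrite /chosen zorbit_zstep. Qed.

Lemma chosen_rev3 t : face_triple t -> chosen t + chosen (rev3 t) = 1.
Proof.
move=> ft; have zz : is_zigzag F (zorbit t) by apply/is_zigzagP; exists t.
by rewrite /chosen zorbit_rev3 -card_setI2 ?tau_orients // eq_sym zorbit_rev3_neq.
Qed.

Lemma count_zigzags_through t : \sum_(Z in tau) (t \in Z) = face_triple t && chosen t.
Proof.
pose through Z := nat_of_bool (face_triple t && (Z == zorbit t)).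
rewrite (eq_bigr through) => [|Z]; rewrite /through.
  have [ft|] /= := boolP (face_triple t); last by rewrite big1.
  rewrite /chosen; have [G_tau|G_tau] := boolP (zorbit t \in tau).
    by rewrite (bigD1 (zorbit t)) //= eqxx big1 // => Z /andP[_ /negbTE->].
  by rewrite big1 // => Z Z_tau; case: eqP Z_tau G_tau => // -> ->.
move=> /tau_zigzag/is_zigzagP[s fs ->].
have [ts|tNs] := boolP (t \in zorbit s).
  by rewrite (mem_zorbit_face ts) fs (zorbit_eq ts) eqxx.
by case: andP => // -[_ /eqP eq_st]; rewrite eq_st zorbit_refl in tNs.
Qed.

Lemma trav_thirds u w : trav tau u w = \sum_(c | face_triple (u, w, c)) chosen (u, w, c).
Proof.
rewrite /trav (eq_bigr (fun Z : {set _} => \sum_c ((u, w, c) \in Z : nat))) => [|Z _].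
  rewrite exchange_big [RHS]big_mkcond; apply: eq_bigr => c _.
  by rewrite count_zigzags_through; case: face_triple.
have -> : [set s in Z | (s.1.1 == u) && (s.1.2 == w)] =
          [set (u, w, c) | c in [set c | (u, w, c) \in Z]].
  apply/setP=> -[[x y] c]; rewrite !inE /=; apply/andP/imsetP.
    by case=> xyc /andP[/eqP ex /eqP ey]; subst x y; exists c; rewrite ?inE.
  by case=> c' uwc' [-> -> ->]; rewrite inE in uwc'; rewrite uwc' !eqxx.
by rewrite card_imset => [|c c' []//]; rewrite -sum1dep_card big_mkcond.
Qed.

Lemma trav_edge u w a b : a != b ->
  (forall c, face_triple (u, w, c) = (c == a) || (c == b)) ->
  trav tau u w = chosen (u, w, a) + chosen (u, w, b).
Proof.
move=> ab thirds; rewrite trav_thirds (eq_bigl (mem [set a; b])) => [|c].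
  by rewrite big_setU1 ?big_set1 ?inE.
by rewrite thirds !inE.
Qed.

Lemma face_triple_swap u w c : face_triple (w, u, c) = face_triple (u, w, c).
Proof. by rewrite -[(w, u, c)]/(rev3 (c, u, w)) face_triple_rev3 face_triple_rot. Qed.

Lemma chosen_across u w a b : face_triple (u, w, a) -> face_triple (u, w, b) -> a != b ->
  chosen (u, w, a) + chosen (w, u, b) = 1.
Proof.
move=> uwa uwb ab; have awu : face_triple (a, w, u) by rewrite -face_triple_rev3.
have -> : (w, u, b) = zstep (rev3 (u, w, a)).
  have wub : face_triple (w, u, b) by rewrite face_triple_swap.
  by rewrite [rev3 _]/= zstepE // -(opposite_uniq awu wub) // eq_sym.
by rewrite chosen_zstep chosen_rev3.
Qed.

Lemma trav_edge_sum u w : adj F u w -> trav tau u w + trav tau w u = 2.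
Proof.
move=> /edge_thirds[a [b [ab thirds]]].
have uwa : face_triple (u, w, a) by rewrite thirds eqxx.
have uwb : face_triple (u, w, b) by rewrite thirds eqxx orbT.
rewrite (trav_edge ab thirds) (@trav_edge w u a b) => [|//|c].
  by rewrite [chosen (w, u, a) + _]addnC addnACA !chosen_across // eq_sym.
by rewrite face_triple_swap.
Qed.

Lemma chosen_trav_gt0 x y w : face_triple (x, y, w) -> chosen (x, y, w) -> 0 < trav tau x y.
Proof. by move=> xyw ch; rewrite trav_thirds (bigD1 w) //= ch. Qed.

Lemma trav_typeI_typeII u w : adj F u w -> 0 < trav tau u w ->
  typeI tau u w || typeII tau u w.
Proof.
move/trav_edge_sum; rewrite /typeI /typeII.
by case: (trav tau u w) => [|[|[|m]]] //; case: (trav tau w u) => [|[|n]].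
Qed.

Lemma trav_eq0_detour u w : adj F u w -> trav tau u w = 0 ->
  exists v, [/\ adj F u v, adj F v w, 0 < trav tau u v & 0 < trav tau v w].
Proof.
move=> /edge_thirds[a [b [ab thirds]]]; rewrite (trav_edge ab thirds).
have uwa : face_triple (u, w, a) by rewrite thirds eqxx.
have uwb : face_triple (u, w, b) by rewrite thirds eqxx orbT.
move/eqP; rewrite addn_eq0 !eqb0 => /andP[/negbTE not_uwa /negbTE not_uwb].
have awu : face_triple (a, w, u) by rewrite -face_triple_rev3.
have wua : face_triple (w, u, a) by rewrite face_triple_swap.
have /andP[uao _] := opposite_face wua.
exists a; split.
- by apply: face_triple_adj uao.
- exact: face_triple_adj awu.
- apply: chosen_trav_gt0 uao _; rewrite -(zstepE wua) chosen_zstep.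
  have := chosen_across uwb uwa (contra_neq esym ab).
  by rewrite not_uwb add0n => /eqP; rewrite eqb1.
- apply: (chosen_trav_gt0 awu).
  by move: (chosen_rev3 uwa); rewrite not_uwa add0n => /eqP; rewrite eqb1.
Qed.

Lemma typeI_sym v w : typeI tau v w = typeI tau w v.
Proof. exact: andbC. Qed.

Lemma ptrans_ge0 v w : (0 <= ptrans tau v w)%R.
Proof. by rewrite /ptrans; apply: divr_ge0; rewrite ?addr_ge0 ?mulr_ge0. Qed.

Lemma ptrans_gt0 v w : typeI tau v w || typeII tau v w -> (0 < ptrans tau v w)%R.
Proof.
move=> vw; have vw_gt0 : (0 < typeI tau v w + 2 * typeII tau v w)%N.
  by case/orP: vw => ->; rewrite ?addn_gt0 ?orbT.
rewrite /ptrans -natrM -natrD divr_gt0 ?ltr0n // /zdeg (bigD1 w) //=.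
exact: leq_trans vw_gt0 (leq_addr _ _).
Qed.

Lemma adj_reachable u w : adj F u w -> reachable (ptrans tau) u w.
Proof.
have edge x y : adj F x y -> (0 < trav tau x y)%N -> reachable (ptrans tau) x y.
  by move=> xy xy_gt0; apply/reachable_step/ptrans_gt0/trav_typeI_typeII.
move=> uw; have [/(trav_eq0_detour uw)[v [uv vw uv_gt0 vw_gt0]]|] := posnP (trav tau u w).
  by apply: (reachable_trans ptrans_ge0 (edge _ _ uv uv_gt0)); apply: edge.
exact: edge.
Qed.

End Zigzags.

Theorem proposition3 (V : finType) (F : {set {set V}})
  (tau : {set {set V * V * V}}) :
  triangulation F -> z_orientation F tau -> has_face_typeI F tau ->
  ergodic (ptrans tau).
Proof.
move=> [[_ card_face] _ edge_two_faces _ connected] [tau_zigzag tau_orients].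
move=> [a [b [c [_ ab bc ac]]]].
have p_ge0 := @ptrans_ge0 V tau.
have irr : irreducible (ptrans tau).
  apply: (irreducible_connect p_ge0 connected).
  exact: (adj_reachable card_face edge_two_faces tau_zigzag tau_orients).
have stepI x y : typeI tau x y -> (0 < nstep (ptrans tau) 1 x y)%R.
  by move=> xy; rewrite nstep1 ptrans_gt0 ?xy.
have stepII x y : typeII tau x y -> (0 < nstep (ptrans tau) 1 x y)%R.
  by move=> xy; rewrite nstep1 ptrans_gt0 ?xy ?orbT.
have [ab1 bc1] := (stepI _ _ ab, stepI _ _ bc).
have [ba1 cb1] : (0 < nstep (ptrans tau) 1 b a)%R /\ (0 < nstep (ptrans tau) 1 c b)%R.
  by split; apply: stepI; rewrite typeI_sym.
have cycle2 : (0 < nstep (ptrans tau) 2 a a)%R := nstepD_gt0 p_ge0 ab1 ba1.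
have cycle3 : (0 < nstep (ptrans tau) 3 a a)%R.
  case/orP: ac => [/stepII ac1|/stepII ca1].
    by apply: (nstepD_gt0 p_ge0 ac1 (nstepD_gt0 p_ge0 cb1 ba1)).
  by apply: (nstepD_gt0 p_ge0 ab1 (nstepD_gt0 p_ge0 bc1 ca1)).
by split=> //; apply: (aperiodic_coprime p_ge0 irr _ _ cycle2 cycle3).
Qed.
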